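(* Let $H$ be a Hopf algebra over a field, $A$ a unital associative algebra and $\cdot:H\otimes A\to A$ a partial action of $H$ on $A$. For each group-like element $h\in G(H)$ and each $a\in A$: (i) $(h\cdot1_A)a(h\cdot1_A)=(h\cdot1_A)a$; (ii) if the restriction of $\cdot$ to $\Bbbk G(H)\otimes A$ is a symmetric partial action, then $(h\cdot1_A)a=a(h\cdot1_A)$; (iii) if $h\cdot1_A=0$, then $(h^i\cdot1_A)(h^{i+1}\cdot1_A)=0$ for all $i\in\mathbb{Z}$.
   Context: $G(H)=\{g\ne0:\Delta(g)=g\otimes g\}$ is the group of group-like elements and $\Bbbk G(H)$ its span. A partial action of $H$ on $A$ is a linear map $\cdot:H\otimes A\to A$, $h\otimes a\mapsto h\cdot a$, with $1_H\cdot a=a$, $h\cdot(ab)=(h_1\cdot a)(h_2\cdot b)$, $h\cdot(k\cdot a)=(h_1\cdot1_A)(h_2k\cdot a)$ for all $h,k\in H$, $a,b\in A$ (Sweedler notation $\Delta(h)=h_1\otimes h_2$); it is symmetric if moreover $h\cdot(k\cdot a)=(h_1k\cdot a)(h_2\cdot1_A)$. *)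

From HB Require Import structures.
From mathcomp Require Import all_boot all_order all_algebra.
Set Implicit Arguments. Unset Strict Implicit. Unset Printing Implicit Defensive.
Import Order.TTheory GRing.Theory Num.Theory.
Local Open Scope ring_scope.

(* Tensors in H (x) H are represented by finite Sweedler sums, i.e. sequences
   of pairs [:: (x_1,y_1); ...] standing for  sum_i x_i (x) y_i.  Two representatives are equal as elements of
   H (x) H iff every bilinear form H x H -> K takes the same value on them
   (H, K vector spaces over a field). *)

Section Defs.
Variables (K : fieldType) (H : algType K).

Definition sw (V : zmodType) (s : seq (H * H)) (f : H -> H -> V) : V :=
  \sum_(p <- s) f p.1 p.2.

Definition lin_form (f : H -> K) : Prop :=
  forall c x y, f (c *: x + y) = c * f x + f y.

Definition lin_map (f : H -> H) : Prop :=
  forall c x y, f (c *: x + y) = c *: f x + f y.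

Definition bilin_form (f : H -> H -> K) : Prop :=
  (forall z, lin_form (f z)) /\ (forall z, lin_form (fun x => f x z)).

Definition trilin_form (f : H -> H -> H -> K) : Prop :=
  (forall y z, lin_form (fun x => f x y z)) /\
  (forall x z, lin_form (fun y => f x y z)) /\
  (forall x y, lin_form (fun z => f x y z)).

Record hopf_struct := HopfStruct {
  comul : H -> seq (H * H);
  counit : H -> K;
  antipode : H -> H;
  comul_lin : forall b, bilin_form b -> lin_form (fun x => sw (comul x) b);
  comul_coassoc : forall (t : H -> H -> H -> K), trilin_form t ->
    forall x, sw (comul x) (fun x1 x2 => sw (comul x1) (fun u v => t u v x2))
            = sw (comul x) (fun x1 x2 => sw (comul x2) (fun u v => t x1 u v));
  counit_lin : lin_form counit;
  counit_l : forall x, sw (comul x) (fun x1 x2 => counit x1 *: x2) = x;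
  counit_r : forall x, sw (comul x) (fun x1 x2 => counit x2 *: x1) = x;
  comul_mul : forall b, bilin_form b -> forall x y,
    sw (comul (x * y)) b =
    sw (comul x) (fun x1 x2 => sw (comul y) (fun y1 y2 => b (x1 * y1) (x2 * y2)));
  comul_one : forall b, bilin_form b -> sw (comul 1) b = b 1 1;
  counit_mul : forall x y, counit (x * y) = counit x * counit y;
  counit_one : counit 1 = 1;
  antipode_lin : lin_map antipode;
  antipode_l : forall x, sw (comul x) (fun x1 x2 => antipode x1 * x2) = counit x *: 1;
  antipode_r : forall x, sw (comul x) (fun x1 x2 => x1 * antipode x2) = counit x *: 1
}.

Variable HS : hopf_struct.

Definition grouplike (g : H) : Prop :=
  g <> 0 /\ forall b, bilin_form b -> sw (comul HS g) b = b g g.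

Definition in_span_grouplike (x : H) : Prop :=
  exists s : seq (K * H), (forall p, p \in s -> grouplike p.2) /\
    x = \sum_(p <- s) p.1 *: p.2.

(* integer powers of a group-like element; its inverse in G(H) is S(g) *)
Definition gpow (g : H) (i : int) : H :=
  match i with
  | Posz n => g ^+ n
  | Negz n => (antipode HS g) ^+ n.+1
  end.

Variable A : algType K.

(* a linear map H (x) A -> A is a bilinear map H -> A -> A *)
Definition bilin_act (act : H -> A -> A) : Prop :=
  (forall c h k a, act (c *: h + k) a = c *: act h a + act k a) /\
  (forall c h a b, act h (c *: a + b) = c *: act h a + act h b).

Definition partial_action_on (P : H -> Prop) (act : H -> A -> A) : Prop :=
  bilin_act act /\
  (P 1 -> forall a, act 1 a = a) /\
  (forall h a b, P h ->
     act h (a * b) = sw (comul HS h) (fun h1 h2 => act h1 a * act h2 b)) /\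
  (forall h k a, P h -> P k ->
     act h (act k a) = sw (comul HS h) (fun h1 h2 => act h1 1 * act (h2 * k) a)).

Definition sym_partial_action_on (P : H -> Prop) (act : H -> A -> A) : Prop :=
  partial_action_on P act /\
  (forall h k a, P h -> P k ->
     act h (act k a) = sw (comul HS h) (fun h1 h2 => act (h1 * k) a * act h2 1)).

Definition partial_action (act : H -> A -> A) : Prop :=
  partial_action_on (fun _ => True) act.

End Defs.

(* For a group-like g, Delta g = g (x) g turns the partial action axioms into
   g.(ab) = (g.a)(g.b) and g.(k.a) = (g.1)(gk.a).  As S(h) is the inverse of h,
   h.(S(h).a) = (h.1) a.  Multiplying on the right by h.1 gives (i); in the
   symmetric case the same term equals a (h.1), giving (ii); and (iii) is
   h^i.(h.1) = h^i.0.
   Delta g = g (x) g is only assumed against scalar bilinear forms, so it has to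
   be transferred to A- and H-valued bilinear maps: this works because linear
   forms separate the points of any vector space, which follows from Zorn's
   lemma applied to the subspaces avoiding a given nonzero vector. *)

From HB Require Import structures.
From mathcomp Require Import all_boot all_order all_algebra.
From mathcomp Require Import boolp classical_sets.
Import GRing.Theory.
Local Open Scope ring_scope.
Set Implicit Arguments. Unset Strict Implicit. Unset Printing Implicit Defensive.

Section LinearForms.
Variables (K : fieldType) (V : lmodType K).

Definition subspace (S : set V) : Prop :=
  S 0 /\ forall c u w, S u -> S w -> S (c *: u + w).

Lemma subspaceZ S c u : subspace S -> S u -> S (c *: u).
Proof. by move=> [S0 SD] Su; rewrite -[_ *: u]addr0; apply: SD. Qed.

Section Avoiding.
Variables (v : V) (v_neq0 : v != 0).

Lemma ex_maximal_subspace_avoiding :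
  exists A, [/\ subspace A, ~ A v & forall B, (A `<` B)%classic -> subspace B -> B v].
Proof.
(* [P S]: S is empty or a subspace avoiding v, so that the empty chain has an
   admissible union. *)
pose P (S : set V) := forall u, S u -> subspace S /\ ~ S v.
have [A [PA Amax]] : exists A, P A /\ forall B, (A `<` B)%classic -> ~ P B.
  apply: Zorn_bigcup => F FP Ftot u [X FX Xu].
  have [[X0 _] _] := FP X FX u Xu.
  split; first split.
  - by exists X.
  - move=> c u1 u2 [Y1 FY1 Y1u1] [Y2 FY2 Y2u2].
    have [Y12|Y21] := Ftot _ _ FY1 FY2.
    + have [[_ Y2D] _] := FP _ FY2 _ Y2u2.
      by exists Y2 => //; apply: Y2D => //; apply: Y12.
    + have [[_ Y1D] _] := FP _ FY1 _ Y1u1.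
      by exists Y1 => //; apply: Y1D => //; apply: Y21.
  - by move=> [Y FY Yv]; have [_] := FP _ FY _ Yv.
have A0 : A 0.
  apply: contrapT => nA0; apply: (Amax [set 0]%classic).
    split=> [u /[dup] /PA [[]] //|/(_ 0 erefl)//].
  move=> _ _; split; last exact/eqP.
  by split=> // c _ _ -> ->; rewrite scaler0 addr0.
have [sA nAv] := PA 0 A0.
exists A; split=> // B AB sB; apply: contrapT => nBv.
exact: (Amax B AB).
Qed.

Lemma maximal_subspace_complement A :
  subspace A -> ~ A v -> (forall B, (A `<` B)%classic -> subspace B -> B v) ->
  forall y, exists c, A (y - c *: v).
Proof.
move=> [A0 AD] nAv Amax y.
have [Ay|nAy] := pselect (A y); first by exists 0; rewrite scale0r subr0.
pose B u := exists c, A (u - c *: y).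
have AB : (A `<` B)%classic.
  split=> [u Au|BA]; first by exists 0; rewrite scale0r subr0.
  by apply/nAy/BA; exists 1; rewrite scale1r subrr.
have sB : subspace B.
  split; first by exists 0; rewrite scale0r subr0.
  move=> c u w [c1 A1] [c2 A2]; exists (c * c1 + c2).
  suff -> : c *: u + w - (c * c1 + c2) *: y = c *: (u - c1 *: y) + (w - c2 *: y) by apply: AD.
  by rewrite scalerDl scalerBr scalerA opprD addrACA.
have [c Avc] := Amax B AB sB.
have c_neq0 : c != 0 by apply/eqP => c0; apply: nAv; rewrite c0 scale0r subr0 in Avc.
exists c^-1; have := subspaceZ (- c^-1) (conj A0 AD) Avc.
by rewrite scalerBr scalerA mulNr mulVf // scaleN1r opprK addrC scaleNr.
Qed.

Lemma nonzero_linear_form : exists phi : {linear V -> K^o}, phi v = 1.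
Proof.
have [A [sA nAv Amax]] := ex_maximal_subspace_avoiding.
have coord := maximal_subspace_complement sA nAv Amax.
have coord_uniq y c d : A (y - c *: v) -> A (y - d *: v) -> c = d.
  move=> Ac Ad; have [//|] := eqVneq c d; rewrite -subr_eq0 => cd_neq0; case: nAv.
  have := subspaceZ (c - d)^-1 sA (proj2 sA (-1) _ _ Ac Ad).
  by rewrite scaleN1r opprB addrA subrK -scalerBl scalerA mulVf // scale1r.
pose phi y : K^o := projT1 (cid (coord y)).
have phiP y : A (y - phi y *: v) := projT2 (cid (coord y)).
have phi_lin : linear phi.
  move=> c u w; apply: (coord_uniq (c *: u + w)); first exact: phiP.
  have := proj2 sA c _ _ (phiP u) (phiP w).
  by rewrite scalerDl scalerBr scalerA opprD addrACA.
pose phiL : {linear V -> K^o} := HB.pack phi (GRing.isLinear.Build _ _ _ _ phi phi_lin).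
exists phiL => /=.
by apply: (coord_uniq v); [exact: phiP | rewrite scale1r subrr; case: sA].
Qed.

End Avoiding.

Lemma linear_forms_separate (u w : V) :
  (forall phi : {linear V -> K^o}, phi u = phi w) -> u = w.
Proof.
move=> eq_phi; apply/eqP; rewrite -subr_eq0; apply: contraT => /nonzero_linear_form[phi].
by rewrite linearB eq_phi subrr => /eqP; rewrite eq_sym oner_eq0.
Qed.

End LinearForms.

Section Sweedler.
Variables (K : fieldType) (H : algType K).

Definition bilinear_map (V : lmodType K) (f : H -> H -> V) : Prop :=
  (forall z, linear (f ^~ z)) /\ (forall z, linear (f z)).

Lemma bilin_form_linear_comp (V : lmodType K) (phi : {linear V -> K^o}) f :
  bilinear_map f -> bilin_form (fun x y => phi (f x y)).
Proof. by move=> [fl fr]; split=> z c x y /=; rewrite (fl, fr) linearP. Qed.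

Lemma bilin_form_comp (b : H -> H -> K) (L1 L2 : H -> H) :
  bilin_form b -> linear L1 -> linear L2 -> bilin_form (fun x y => b (L1 x) (L2 y)).
Proof. by move=> [bl br] L1lin L2lin; split=> z c x y /=; rewrite (L1lin, L2lin) (bl, br). Qed.

Lemma sw_eq_bilinear_map (s t : seq (H * H)) :
  (forall b, bilin_form b -> sw s b = sw t b) ->
  forall (V : lmodType K) (f : H -> H -> V), bilinear_map f -> sw s f = sw t f.
Proof.
move=> eq_st V f bf; apply: linear_forms_separate => phi.
by rewrite /sw !linear_sum; exact: (eq_st _ (bilin_form_linear_comp phi bf)).
Qed.

Lemma eq_sw (V : zmodType) (s : seq (H * H)) (f f' : H -> H -> V) :
  f =2 f' -> sw s f = sw s f'.
Proof. by move=> eq_f; apply: eq_bigr => p _; apply: eq_f. Qed.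

Lemma sw_exchange (V : zmodType) (s t : seq (H * H)) (F : H -> H -> H -> H -> V) :
  sw s (fun x1 x2 => sw t (F x1 x2)) = sw t (fun y1 y2 => sw s (fun x1 x2 => F x1 x2 y1 y2)).
Proof. exact: exchange_big. Qed.

Lemma linear_mulr (k : H) : linear (fun x : H => x * k).
Proof. by move=> c x y; rewrite mulrDl scalerAl. Qed.

Lemma linear_mull (k : H) : linear (fun x : H => k * x).
Proof. by move=> c x y; rewrite mulrDr scalerAr. Qed.

End Sweedler.

Section GroupLike.
Variables (K : fieldType) (H : algType K) (HS : hopf_struct H).

Definition comul_diag (g : H) : Prop :=
  forall b, bilin_form b -> sw (comul HS g) b = b g g.

Lemma comul_diagE g : comul_diag g ->
  forall (V : lmodType K) (f : H -> H -> V), bilinear_map f -> sw (comul HS g) f = f g g.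
Proof.
move=> gg V f bf; rewrite -[f g g](big_seq1 +%R (g, g) (fun p => f p.1 p.2)).
by apply: sw_eq_bilinear_map bf => b bb; rewrite gg // /sw big_seq1.
Qed.

Lemma comul_diag1 : comul_diag 1.
Proof. by move=> b bb; rewrite comul_one. Qed.

Lemma comul_diagM x y : comul_diag x -> comul_diag y -> comul_diag (x * y).
Proof.
move=> gx gy b bb; rewrite comul_mul //.
have bx x1 x2 : bilin_form (fun u v => b (x1 * u) (x2 * v)).
  by apply: bilin_form_comp => //; apply: linear_mull.
under eq_sw => x1 x2 do rewrite (gy _ (bx x1 x2)).
by rewrite gx //; apply: bilin_form_comp => //; apply: linear_mulr.
Qed.

Lemma comul_diagX x n : comul_diag x -> comul_diag (x ^+ n).
Proof.
move=> gx; elim: n => [|n IHn]; first by rewrite expr0; exact: comul_diag1.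
by rewrite exprS; apply: comul_diagM.
Qed.

Lemma grouplike_in_span g : grouplike HS g -> in_span_grouplike HS g.
Proof.
move=> gg; exists [:: (1, g)]; split; last by rewrite big_seq1 scale1r.
by move=> p; rewrite inE => /eqP ->.
Qed.

Section Element.
Variables (g : H) (gg : grouplike HS g).

Lemma grouplike_counit : counit HS g = 1.
Proof.
have [g_neq0 gdiag] := gg.
have : counit HS g *: g = g.
  rewrite -[RHS](counit_l HS) (comul_diagE gdiag) //.
  split=> z c x y /=; first by rewrite (counit_lin HS) scalerDl scalerA.
  by rewrite scalerDr !scalerA mulrC.
move/eqP; rewrite -subr_eq0 -[X in _ - X]scale1r -scalerBl scaler_eq0 subr_eq0.
by case/orP=> /eqP.
Qed.

Lemma grouplike_mulrS : g * antipode HS g = 1.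
Proof.
have := antipode_r HS g; rewrite grouplike_counit scale1r (comul_diagE gg.2) //.
split=> z; first exact: linear_mulr.
by move=> c x y; rewrite (antipode_lin HS) linear_mull.
Qed.

Lemma grouplike_mulSr : antipode HS g * g = 1.
Proof.
have := antipode_l HS g; rewrite grouplike_counit scale1r (comul_diagE gg.2) //.
split=> z; last exact: linear_mull.
by move=> c x y; rewrite (antipode_lin HS) linear_mulr.
Qed.

Lemma comul_diag_antipode : comul_diag (antipode HS g).
Proof.
move=> b bb; set Sg := antipode HS g.
pose bS u v := b (Sg * u) (Sg * v).
have bbS : bilin_form bS by apply: bilin_form_comp => //; apply: linear_mull.
have -> : b Sg Sg = bS 1 1 by rewrite /bS mulr1.
rewrite -(comul_one HS bbS) -grouplike_mulrS comul_mul // sw_exchange.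
apply: eq_sw => y1 y2.
rewrite (gg.2 _ (bilin_form_comp bbS (linear_mulr y1) (linear_mulr y2))).
by rewrite /bS !mulrA grouplike_mulSr !mul1r.
Qed.

Lemma grouplike_antipode : grouplike HS (antipode HS g).
Proof.
split; last exact: comul_diag_antipode.
by move=> Sg0; move: grouplike_mulrS; rewrite Sg0 mulr0 => /eqP; rewrite eq_sym oner_eq0.
Qed.

Lemma comul_diag_gpow i : comul_diag (gpow HS g i).
Proof. by case: i => n; apply: comul_diagX; [exact: gg.2 | exact: comul_diag_antipode]. Qed.

Lemma gpowSr i : gpow HS g (i + 1) = gpow HS g i * g.
Proof.
case: i => [n|[|n]] /=; first by rewrite addn1 exprSr.
  by rewrite expr1 grouplike_mulSr.
by rewrite subn1 /= [_ ^+ n.+2]exprSr -mulrA grouplike_mulSr mulr1.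
Qed.

End Element.
End GroupLike.

Section PartialAction.
Variables (K : fieldType) (H : algType K) (HS : hopf_struct H).
Variables (A : algType K) (act : H -> A -> A) (act_partial : partial_action HS act).

Lemma act0r h : act h 0 = 0.
Proof.
have [[_ act_lin] _] := act_partial.
have := act_lin 1 h 0 0; rewrite scaler0 scale1r addr0 => act00.
by apply: (addrI (act h 0)); rewrite addr0 -act00.
Qed.

Lemma bilinear_act_mul (L1 L2 : H -> H) a b : linear L1 -> linear L2 ->
  bilinear_map (fun h1 h2 => act (L1 h1) a * act (L2 h2) b).
Proof.
have [[act_lin _] _] := act_partial.
move=> L1lin L2lin; split=> z c x y /=.
  by rewrite (L1lin c x y) act_lin mulrDl scalerAl.
by rewrite (L2lin c x y) act_lin mulrDr scalerAr.
Qed.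

Lemma act_diagM g a b : comul_diag HS g -> act g (a * b) = act g a * act g b.
Proof.
have [_ [_ [actM _]]] := act_partial.
by move=> gg; rewrite actM // (comul_diagE gg) //; apply: bilinear_act_mul.
Qed.

Lemma act_diag_act g k a : comul_diag HS g -> act g (act k a) = act g 1 * act (g * k) a.
Proof.
have [_ [_ [_ actC]]] := act_partial.
by move=> gg; rewrite actC // (comul_diagE gg) //; apply: bilinear_act_mul (linear_mulr k).
Qed.

Section GroupLikeAction.
Variables (h : H) (hg : grouplike HS h).

Lemma act_act_antipode a : act h (act (antipode HS h) a) = act h 1 * a.
Proof.
have [_ [act1 _]] := act_partial.
by rewrite act_diag_act ?grouplike_mulrS ?act1 //; exact: hg.2.
Qed.

Lemma act1_mul_act1 a : act h 1 * a * act h 1 = act h 1 * a.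
Proof. by rewrite -act_act_antipode -act_diagM ?mulr1 //; exact: hg.2. Qed.

Lemma act1_central a :
  sym_partial_action_on HS (in_span_grouplike HS) act -> act h 1 * a = a * act h 1.
Proof.
have [_ [act1 _]] := act_partial.
move=> [_ act_act_sym].
have span_h := grouplike_in_span hg.
have span_Sh := grouplike_in_span (grouplike_antipode hg).
rewrite -act_act_antipode act_act_sym // (comul_diagE hg.2) ?grouplike_mulrS ?act1 //.
by apply: bilinear_act_mul; [exact: linear_mulr | done].
Qed.

Lemma act_gpow1_orth :
  act h 1 = 0 -> forall i, act (gpow HS h i) 1 * act (gpow HS h (i + 1)) 1 = 0.
Proof.
move=> h0 i; rewrite gpowSr // -act_diag_act ?h0 ?act0r //.
exact: comul_diag_gpow.
Qed.

End GroupLikeAction.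
End PartialAction.

Theorem lemma3p1 (K : fieldType) (H : algType K) (HS : hopf_struct H)
  (A : algType K) (act : H -> A -> A) (Hact : partial_action HS act)
  (h : H) (hg : grouplike HS h) (a : A) :
  [/\ act h 1 * a * act h 1 = act h 1 * a,
      (sym_partial_action_on HS (in_span_grouplike HS) act ->
         act h 1 * a = a * act h 1)
    & (act h 1 = 0 ->
         forall i : int, act (gpow HS h i) 1 * act (gpow HS h (i + 1)) 1 = 0)].
Proof.
split; [exact: (act1_mul_act1 Hact hg a) | exact: (act1_central Hact hg a) |].
exact: (act_gpow1_orth Hact hg).
Qed.
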